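(* Let $\mathbb V\subset\mathbb W$ be Hilbert spaces with bounded inclusion, $\mathbb V$ dense in $\mathbb W$ and $\mathbb V$ separable. Let $\mathcal L_N,\mathcal L:\mathbb V\to\mathbb W$ be bounded operators that are self-adjoint (as operators on $\mathbb W$ with dense domain $\mathbb V$) and have pure-point spectrum. Let $\lambda$ be an eigenvalue of $\mathcal L$ of finite geometric multiplicity and $\delta>0$ such that $\lambda$ is at distance more than $3\delta$ from all other elements of the spectrum of $\mathcal L$. Suppose there exists $N_0=N_0(\lambda,\delta)$ such that for $\delta\le|z-\lambda|\le2\delta$ and $N>N_0$, $z\,\mathrm{id}-\mathcal L_N$ is invertible on $\mathbb W$, and $$\|(z\,\mathrm{id}-\mathcal L)^{-1}(\mathcal L-\mathcal L_N)v\|_{\mathbb W}\to0,\qquad\|(z\,\mathrm{id}-\mathcal L_N)^{-1}(\mathcal L-\mathcal L_N)u\|_{\mathbb W}\to0$$ as $N\to\infty$, uniformly in $z$ with $\delta\le|z-\lambda|\le2\delta$, for all $\mathbb W$-normalized eigenfunctions $v$ of $\mathcal L_N$ and $u$ of $\mathcal L$ associated with eigenvalues lying in $\{z\in\mathbb C:|z-\lambda|\le\delta\}$. Then there exists $N_0'$ such that for $N>N_0'$ the geometric multiplicity of $\lambda$ equals the sum of the geometric multiplicities of the eigenvalues $\lambda'$ of $\mathcal L_N$ satisfying $|\lambda'-\lambda|<\delta$. *)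

(* complex scalars are R[i] (mathcomp-real-closed complex)
   over an arbitrary R : realType, i.e. the complex numbers.
   Hilbert spaces are lmodTypes over R[i] equipped with an inner product. *)
From mathcomp Require Import all_boot all_order all_algebra.
From mathcomp Require Export complex.
From mathcomp Require Export reals.
Set Implicit Arguments. Unset Strict Implicit. Unset Printing Implicit Defensive.
Import Order.TTheory GRing.Theory Num.Theory.
Local Open Scope ring_scope.

Section Hilbert.
Variable R : realType.
Local Notation C := (R[i]).

Definition is_inner_product (W : lmodType C) (ip : W -> W -> C) : Prop :=
  [/\ (forall (a : C) (x y z : W), ip (a *: x + y) z = a * ip x z + ip y z),
      (forall x y : W, ip y x = (ip x y)^*),
      (forall x : W, 0 <= ip x x) &
      (forall x : W, ip x x = 0 -> x = 0)].

Definition hnorm (W : lmodType C) (ip : W -> W -> C) (x : W) : C :=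
  sqrtC (ip x x).

Definition cauchy_seq (W : lmodType C) (ip : W -> W -> C) (u : nat -> W) : Prop :=
  forall eps : C, 0 < eps -> exists N : nat, forall m n : nat,
    (N <= m)%N -> (N <= n)%N -> hnorm ip (u m - u n) < eps.

Definition converges_to (W : lmodType C) (ip : W -> W -> C) (u : nat -> W) (x : W) : Prop :=
  forall eps : C, 0 < eps -> exists N : nat, forall n : nat,
    (N <= n)%N -> hnorm ip (u n - x) < eps.

Definition is_hilbert (W : lmodType C) (ip : W -> W -> C) : Prop :=
  is_inner_product ip /\
  (forall u : nat -> W, cauchy_seq ip u -> exists x : W, converges_to ip u x).

Definition separable (V : lmodType C) (ip : V -> V -> C) : Prop :=
  exists d : nat -> V, forall (v : V) (eps : C), 0 < eps ->
    exists n : nat, hnorm ip (v - d n) < eps.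

Definition bounded_op (V W : lmodType C) (ipV : V -> V -> C) (ipW : W -> W -> C)
  (f : V -> W) : Prop :=
  exists c : C, forall v : V, hnorm ipW (f v) <= c * hnorm ipV v.

Definition dense_range (V W : lmodType C) (ipW : W -> W -> C) (f : V -> W) : Prop :=
  forall (w : W) (eps : C), 0 < eps -> exists v : V, hnorm ipW (w - f v) < eps.

(* Operators L : V -> W, viewed as operators in W with domain i(V). *)

(* self-adjoint: symmetric, and the domain of the adjoint is contained in
   (hence equal to) the domain i(V) *)
Definition self_adjoint (V W : lmodType C) (ipW : W -> W -> C) (i : V -> W)
  (L : V -> W) : Prop :=
  (forall u v : V, ipW (L u) (i v) = ipW (i u) (L v)) /\
  (forall w w' : W, (forall v : V, ipW (L v) w = ipW (i v) w') ->
     exists u : V, i u = w).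

Definition shiftop (V W : lmodType C) (i : V -> W) (L : V -> W) (z : C) (v : V) : W :=
  z *: i v - L v.

Definition invertible_at (V W : lmodType C) (ipW : W -> W -> C) (i : V -> W)
  (L : V -> W) (z : C) : Prop :=
  exists g : W -> V, cancel (shiftop i L z) g /\ cancel g (shiftop i L z) /\
    bounded_op ipW ipW (fun w => i (g w)).

Definition in_spectrum (V W : lmodType C) (ipW : W -> W -> C) (i : V -> W)
  (L : V -> W) (z : C) : Prop := ~ invertible_at ipW i L z.

Definition is_eigenvector (V W : lmodType C) (i : V -> W) (L : V -> W)
  (z : C) (v : V) : Prop := v != 0 /\ L v = z *: i v.

Definition is_eigenvalue (V W : lmodType C) (i : V -> W) (L : V -> W) (z : C) : Prop :=
  exists v : V, is_eigenvector i L z v.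

(* pure-point spectrum: the eigenvectors span a dense subspace of W
   (equivalently W has an orthonormal basis of eigenvectors) *)
Definition pure_point (V W : lmodType C) (ipW : W -> W -> C) (i : V -> W)
  (L : V -> W) : Prop :=
  forall (w : W) (eps : C), 0 < eps ->
    exists (n : nat) (f : 'I_n -> V) (mu c : 'I_n -> C),
      (forall k, L (f k) = mu k *: i (f k)) /\
      hnorm ipW (w - \sum_(k < n) c k *: i (f k)) < eps.

Definition lin_indep (V : lmodType C) (n : nat) (f : 'I_n -> V) : Prop :=
  forall c : 'I_n -> C, \sum_(k < n) c k *: f k = 0 -> forall k, c k = 0.

Definition geom_mult (V W : lmodType C) (i : V -> W) (L : V -> W)
  (z : C) (m : nat) : Prop :=
  (exists f : 'I_m -> V, (forall k, L (f k) = z *: i (f k)) /\ lin_indep f) /\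
  (forall f : 'I_m.+1 -> V, (forall k, L (f k) = z *: i (f k)) -> ~ lin_indep f).

End Hilbert.

(* Fix z = lambda + delta.  If L_N v = mu v with |mu - lambda| < delta and |v| = 1,
   then y = (z - L)^-1 (L - L_N) v satisfies (z - L)(v + y) = (z - mu) v, so against an
   eigenvector of L with eigenvalue t <> lambda the vector v pairs like y times
   (z - t)/(t - mu).  Isolation of lambda gives |z - t| <= 2 |t - mu| for these t, and
   expanding in eigenvectors of L (pure point spectrum) puts v within 4|y| of
   ker (L - lambda).  Symmetrically, every unit vector of ker (L - lambda) lies within
   4|y| of the span of the eigenvectors of L_N with eigenvalues in the disc
   |t - lambda| < delta.  Finally, p orthonormal vectors within rho of the span of an
   orthonormal family b force p <= |b| as soon as p rho < 1; used in both directions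
   with |y| < 1/(8(m+1)) this makes the two dimensions equal. *)

From mathcomp Require Import all_boot all_order all_algebra.
From mathcomp Require Import complex reals.
From mathcomp Require Import ring zify.
From Stdlib Require Import Classical.
Import Order.TTheory GRing.Theory Num.Theory.
Local Open Scope ring_scope.

Set Implicit Arguments. Unset Strict Implicit. Unset Printing Implicit Defensive.

Lemma kermx_exists (F : fieldType) p q (M : 'M[F]_(p, q)) : (q < p)%N ->
  exists2 a : 'rV_p, a != 0 & a *m M = 0.
Proof.
move=> qp; have K0 : kermx M != 0.
  rewrite kermx_eq0 /row_free; apply: contraTN qp => /eqP rkM.
  by rewrite -leqNgt -rkM rank_leq_col.
have /existsP[[j k] /= Kjk] : [exists jk : 'I_p * 'I_p, kermx M jk.1 jk.2 != 0].
  apply: contraNT K0 => /existsPn Kn; apply/eqP/matrixP => j k.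
  by have /negPn/eqP /= -> := Kn (j, k); rewrite mxE.
exists (row j (kermx M)).
  by apply: contraNneq Kjk => /rowP/(_ k); rewrite mxE [RHS]mxE => ->.
by rewrite -(row_mul j (kermx M) M) mulmx_ker row0.
Qed.

Lemma bounded_ex_max (P : nat -> Prop) m : P 0%N -> (forall n, P n -> (n <= m)%N) ->
  exists2 n, P n & forall k, P k -> (k <= n)%N.
Proof.
move=> P0 Pm; suff from_below d : forall n, P n -> (m - n <= d)%N ->
    exists2 n, P n & forall k, P k -> (k <= n)%N.
  exact: from_below m 0%N P0 (leq_subr _ _).
elim: d => [|d IH] n Pn hd.
  by exists n => // k /Pm; lia.
have [[k [Pk nk]]|hn] := classic (exists k, P k /\ (n < k)%N).
  by apply: (IH k Pk); have := Pm _ Pk; lia.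
exists n => // k Pk; rewrite leqNgt; apply/negP => nk.
by apply: hn; exists k.
Qed.

Lemma choose_on_seq (T : eqType) (X : Type) (x0 : X) (s : seq T) (Q : T -> X -> Prop) :
  (forall t, t \in s -> exists x, Q t x) -> exists f : T -> X, forall t, t \in s -> Q t (f t).
Proof.
elim: s => [|t s IH] h; first by exists (fun _ => x0).
have [x hx] := h t (mem_head _ _).
have [f hf] := IH (fun u us => h u (@mem_behead _ (t :: s) _ us)).
exists (fun u => if u == t then x else f u) => u; rewrite inE.
by case: eqP => [->|_] //= /hf.
Qed.

Section InnerProduct.
Variables (R : realType) (U : lmodType R[i]) (ip : U -> U -> R[i]).
Hypothesis ip_inner : is_inner_product ip.
Local Notation nm := (hnorm ip).

Lemma ipDZl a x y z : ip (a *: x + y) z = a * ip x z + ip y z.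
Proof. by case: ip_inner => h _ _ _; apply: h. Qed.
Lemma ipC x y : ip y x = (ip x y)^*.
Proof. by case: ip_inner => _ h _ _; apply: h. Qed.
Lemma ip_ge0 x : 0 <= ip x x.
Proof. by case: ip_inner => _ _ h _; apply: h. Qed.
Lemma ip_eq0 x : ip x x = 0 -> x = 0.
Proof. by case: ip_inner => _ _ _ h; apply: h. Qed.

Lemma ip0l z : ip 0 z = 0.
Proof.
have := ipDZl 1 0 0 z; rewrite scaler0 addr0 mul1r.
by move/(congr1 (fun t => t - ip 0 z)); rewrite subrr addrK => ->.
Qed.
Lemma ipDl x y z : ip (x + y) z = ip x z + ip y z.
Proof. by rewrite -[x]scale1r ipDZl mul1r scale1r. Qed.
Lemma ipZl a x z : ip (a *: x) z = a * ip x z.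
Proof. by rewrite -[_ *: _]addr0 ipDZl ip0l addr0. Qed.
Lemma ipNl x z : ip (- x) z = - ip x z.
Proof. by rewrite -scaleN1r ipZl mulN1r. Qed.
Lemma ipBl x y z : ip (x - y) z = ip x z - ip y z.
Proof. by rewrite ipDl ipNl. Qed.
Lemma ip0r z : ip z 0 = 0.
Proof. by rewrite ipC ip0l conjC0. Qed.
Lemma ipDr x y z : ip z (x + y) = ip z x + ip z y.
Proof. by rewrite ipC ipDl rmorphD /= -!ipC. Qed.
Lemma ipZr a x z : ip z (a *: x) = a^* * ip z x.
Proof. by rewrite ipC ipZl rmorphM /= -!ipC. Qed.
Lemma ipNr x z : ip z (- x) = - ip z x.
Proof. by rewrite -scaleN1r ipZr rmorphN1 mulN1r. Qed.
Lemma ipBr x y z : ip z (x - y) = ip z x - ip z y.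
Proof. by rewrite ipDr ipNr. Qed.
Lemma ip_suml (I : Type) (s : seq I) (P : pred I) (F : I -> U) z :
  ip (\sum_(k <- s | P k) F k) z = \sum_(k <- s | P k) ip (F k) z.
Proof. by elim/big_rec2: _ => [|k a b _ <-]; rewrite ?ip0l ?ipDl. Qed.
Lemma ip_sumr (I : Type) (s : seq I) (P : pred I) (F : I -> U) z :
  ip z (\sum_(k <- s | P k) F k) = \sum_(k <- s | P k) ip z (F k).
Proof. by elim/big_rec2: _ => [|k a b _ <-]; rewrite ?ip0r ?ipDr. Qed.

Lemma ip_conj_diag x : (ip x x)^* = ip x x.
Proof. exact: geC0_conj (ip_ge0 x). Qed.

Lemma ip_diagD x y :
  ip (x + y) (x + y) = ip x x + ip y y + (ip x y + (ip x y)^*).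
Proof. by rewrite ipDl !ipDr -ipC; ring. Qed.

Lemma ip_orthD x y : ip x y = 0 -> ip (x + y) (x + y) = ip x x + ip y y.
Proof. by move=> xy; rewrite ip_diagD xy conjC0 !addr0. Qed.

Lemma nm_ge0 x : 0 <= nm x.
Proof. by rewrite sqrtC_ge0 ip_ge0. Qed.
Lemma nm_sqr x : nm x ^+ 2 = ip x x.
Proof. exact: sqrtCK. Qed.
Lemma nm_eq1 x : ip x x = 1 -> nm x = 1.
Proof. by rewrite /hnorm => ->; rewrite sqrtC1. Qed.
Lemma nm_real x : nm x \is Num.real.
Proof. exact: ger0_real (nm_ge0 x). Qed.
Lemma nmN x : nm (- x) = nm x.
Proof. by rewrite /hnorm ipNl ipNr opprK. Qed.
Lemma nm_eq0 x : nm x = 0 -> x = 0.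
Proof. by move=> x0; apply: ip_eq0; rewrite -nm_sqr x0 expr0n. Qed.

Lemma cauchy_schwarz_sqr x y : `|ip x y| ^+ 2 <= ip x x * ip y y.
Proof.
have [->|y0] := eqVneq y 0; first by rewrite ip0r ip0l normr0 expr0n mulr0.
have yy0 : ip y y != 0 by apply: contra_neq y0; apply: ip_eq0.
have := ip_ge0 (x - (ip x y / ip y y) *: y).
rewrite ipBl !ipBr !ipZl !ipZr rmorphM /= fmorphV /= ip_conj_diag -ipC normCK.
have -> : ip x x - ip y x / ip y y * ip x y
    - (ip x y / ip y y * ip y x - ip x y / ip y y * (ip y x / ip y y * ip y y))
    = (ip x x * ip y y - ip x y * ip y x) / ip y y by field.
rewrite pmulr_lge0 ?subr_ge0 -?ipC //.
by rewrite invr_gt0 lt_def yy0 ip_ge0.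
Qed.

Lemma cauchy_schwarz x y : `|ip x y| <= nm x * nm y.
Proof.
rewrite -ler_sqr ?nnegrE ?mulr_ge0 ?nm_ge0 ?normr_ge0 //.
by rewrite exprMn !nm_sqr cauchy_schwarz_sqr.
Qed.

Lemma nmD x y : nm (x + y) <= nm x + nm y.
Proof.
rewrite -ler_sqr ?nnegrE ?addr_ge0 ?nm_ge0 // nm_sqr ip_diagD sqrrD !nm_sqr.
rewrite [ip x x + _ *+ 2 + _]addrAC lerD2l.
have -> : ip x y + (ip x y)^* = 2 * 'Re (ip x y) by rewrite ReE mulrC divfK ?pnatr_eq0.
rewrite -[X in _ <= X]mulr_natl ler_pM2l ?ltr0n //.
have [Re_le_norm _] := leif_Re_Creal (ip x y).
exact: le_trans Re_le_norm (cauchy_schwarz x y).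
Qed.

Definition orthonormal (b : seq U) :=
  uniq b /\ {in b &, forall y y', ip y y' = (y == y')%:R}.

Definition proj (b : seq U) x := \sum_(y <- b) ip x y *: y.

Lemma ip_proj_mem b x y : orthonormal b -> y \in b -> ip (proj b x) y = ip x y.
Proof.
move=> [ub bON] yb; rewrite ip_suml (bigD1_seq y) //= ipZl [ip y y]bON // eqxx mulr1.
rewrite big_seq_cond big1 ?addr0 // => y' /andP[y'b /negPf y'y].
by rewrite ipZl [ip y' y]bON // y'y mulr0.
Qed.

Lemma ip_sub_proj b x y : orthonormal b -> y \in b -> ip (x - proj b x) y = 0.
Proof. by move=> bON yb; rewrite ipBl ip_proj_mem // subrr. Qed.

Lemma ip_proj_orth b w x : (forall y, y \in b -> ip w y = 0) -> ip w (proj b x) = 0.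
Proof. by move=> wb; rewrite ip_sumr big_seq big1 // => y yb; rewrite ipZr wb ?mulr0. Qed.

Lemma proj_orth b e : (forall y, y \in b -> ip e y = 0) -> proj b e = 0.
Proof. by move=> eb; rewrite /proj big_seq big1 // => y yb; rewrite eb // scale0r. Qed.

Lemma proj_cat b1 b2 e : proj (b1 ++ b2) e = proj b1 e + proj b2 e.
Proof. by rewrite /proj big_cat. Qed.

Lemma orthonormal_nth b n : orthonormal b -> (n <= size b)%N ->
  forall j k : 'I_n, ip (nth 0 b j) (nth 0 b k) = (j == k)%:R.
Proof.
move=> [ub bON] nb j k; have jb (l : 'I_n) : (l < size b)%N by exact: leq_trans (ltn_ord l) nb.
by rewrite bON ?mem_nth // nth_uniq.
Qed.

Lemma orthonormal_lin_indep b n : orthonormal b -> (n <= size b)%N ->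
  lin_indep (fun k : 'I_n => nth 0 b k).
Proof.
move=> bON nb c c0 j; have := congr1 (ip^~ (nth 0 b j)) c0.
rewrite /= ip0l ip_suml (bigD1 j) //= big1 => [|k kj]; rewrite ipZl orthonormal_nth //.
  by rewrite eqxx mulr1 addr0.
by rewrite (negPf kj) mulr0.
Qed.

Lemma orth_comb_exists b p (f : 'I_p -> U) : (size b < p)%N ->
  exists2 c : 'I_p -> R[i], (exists j, c j != 0) &
    forall y, y \in b -> ip (\sum_j c j *: f j) y = 0.
Proof.
pose M := \matrix_(j < p, l < size b) ip (f j) (nth 0 b l).
move=> bp; have [a a0 aM] := kermx_exists M bp.
exists (a 0).
  apply/existsP; apply: contraNT a0 => /existsPn a0j; apply/eqP/rowP => j.
  by have /negPn/eqP -> := a0j j; rewrite mxE.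
move=> y /(nthP 0)[l lb <-]; move/matrixP: aM => /(_ 0 (Ordinal lb)).
rewrite !mxE ip_suml => aMl; rewrite -[RHS]aMl.
by apply: eq_bigr => j _; rewrite ipZl mxE.
Qed.

Lemma span_lin_dep b p (f : 'I_p -> U) : (size b < p)%N ->
  (forall j, f j = proj b (f j)) -> ~ lin_indep f.
Proof.
move=> bp fb f_indep; have [c [j cj] cb] := orth_comb_exists f bp.
suff w0 : \sum_j c j *: f j = 0 by move: cj; rewrite (f_indep c w0 j) eqxx.
set w := \sum_j _ in cb *; apply: ip_eq0; rewrite {2}/w ip_sumr big1 // => k _.
by rewrite ipZr fb ip_proj_orth ?mulr0.
Qed.

Lemma near_span_card_le p (a : 'I_p -> U) b rho :
  (forall j k, ip (a j) (a k) = (j == k)%:R) ->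
  (forall j, nm (a j - proj b (a j)) <= rho) -> p%:R * rho < 1 -> (p <= size b)%N.
Proof.
(* A nonzero combination w of the a_j orthogonal to b has coefficients <w, a_j>, so
   |w|^2 = sum_j conj <w, a_j> <w, a_j - proj b a_j> <= p rho |w|^2. *)
move=> aON near p_rho; rewrite leqNgt; apply/negP => bp.
have [c [j cj] cb] := orth_comb_exists a bp; set w := \sum_j _ in cb.
have wa k : ip w (a k) = c k.
  rewrite ip_suml (bigD1 k) //= big1 => [|l /negPf lk]; last by rewrite ipZl aON lk mulr0.
  by rewrite ipZl aON eqxx mulr1 addr0.
have na k : nm (a k) = 1 by apply: nm_eq1; rewrite aON eqxx.
have ww : ip w w <= p%:R * rho * ip w w.
  have -> : p%:R * rho * ip w w = \sum_(k < p) nm w * (nm w * rho).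
    by rewrite sumr_const card_ord -nm_sqr; ring.
  apply: le_trans (real_ler_norm (ger0_real (ip_ge0 w))) _.
  have -> : ip w w = \sum_k (c k)^* * ip w (a k - proj b (a k)).
    by rewrite {2}/w ip_sumr; apply: eq_bigr => k _; rewrite ipZr ipBr ip_proj_orth ?subr0.
  apply: le_trans (ler_norm_sum _ _ _) _; apply: ler_sum => k _.
  rewrite normrM norm_conjC -wa.
  apply: ler_pM; rewrite ?normr_ge0 //.
    by apply: le_trans (cauchy_schwarz _ _) _; rewrite na mulr1.
  by apply: le_trans (cauchy_schwarz _ _) _; rewrite ler_wpM2l ?nm_ge0.
have : (1 - p%:R * rho) * ip w w <= 0 by rewrite mulrBl mul1r subr_le0.
rewrite pmulr_rle0 ?subr_gt0 // => wle0.
have /ip_eq0 w0 : ip w w = 0 by apply/eqP; rewrite eq_le wle0 ip_ge0.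
by move: cj; rewrite -wa w0 ip0l eqxx.
Qed.

Lemma ip_normalize e : e != 0 -> ip ((nm e)^-1 *: e) ((nm e)^-1 *: e) = 1.
Proof.
move=> e0; have ne0 : nm e != 0 by apply: contra_neq e0; apply: nm_eq0.
by rewrite ipZl ipZr -nm_sqr fmorphV /= (conj_Creal (nm_real e)); field.
Qed.

Lemma orthonormal_cat b1 b2 : orthonormal b1 -> orthonormal b2 ->
  (forall y1 y2, y1 \in b1 -> y2 \in b2 -> ip y1 y2 = 0) -> orthonormal (b1 ++ b2).
Proof.
move=> [u1 b1ON] [u2 b2ON] b12.
have b1Nb2 y : y \in b1 -> y \in b2 -> False.
  by move=> y1 y2; move: (b12 _ _ y1 y2); rewrite b1ON // eqxx => /eqP; rewrite oner_eq0.
split.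
  rewrite cat_uniq u1 u2 andbT; apply/hasPn => y y2; apply/negP => y1.
  exact: b1Nb2 y1 y2.
move=> y y'; rewrite !mem_cat => /orP[y1|y2] /orP[y1'|y2']; first exact: b1ON.
- by rewrite b12 //; case: eqP => // yy'; case: (b1Nb2 y) => //; rewrite yy'.
- by rewrite ipC b12 // conjC0; case: eqP => // yy'; case: (b1Nb2 y') => //; rewrite -yy'.
- exact: b2ON.
Qed.

Lemma orthonormal_cons u b : orthonormal b -> ip u u = 1 ->
  (forall y, y \in b -> ip u y = 0) -> orthonormal (u :: b).
Proof.
move=> bON uu ub; apply: (@orthonormal_cat [:: u] b) => //.
  by split => // y y'; rewrite !inE => /eqP-> /eqP->; rewrite eqxx.
by move=> y1 y2; rewrite inE => /eqP->; apply: ub.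
Qed.

Definition subspace (S : U -> Prop) := S 0 /\ forall a x y, S x -> S y -> S (a *: x + y).

Lemma subspaceZ (S : U -> Prop) a x : subspace S -> S x -> S (a *: x).
Proof. by move=> [S0 SP] Sx; rewrite -[_ *: _]addr0; apply: SP. Qed.

Lemma subspaceB (S : U -> Prop) x y : subspace S -> S x -> S y -> S (x - y).
Proof. by move=> [S0 SP] Sx Sy; rewrite addrC -scaleN1r; apply: SP. Qed.

Lemma subspace_proj (S : U -> Prop) b x : subspace S ->
  (forall y, y \in b -> S y) -> S (proj b x).
Proof.
move=> [S0 SP] bS; rewrite /proj big_seq; elim/big_rec: _ => // y z yb Sz.
exact: SP (bS y yb) Sz.
Qed.

Lemma max_orthonormal (S : U -> Prop) m : subspace S ->
  (forall b, orthonormal b -> (forall y, y \in b -> S y) -> (size b <= m)%N) ->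
  exists b, [/\ orthonormal b, forall y, y \in b -> S y & forall x, S x -> x = proj b x].
Proof.
move=> Ssub Sm.
pose P n := exists2 b, orthonormal b /\ (forall y, y \in b -> S y) & size b = n.
have P0 : P 0%N by exists [::] => //; split => //; split.
have Pm n : P n -> (n <= m)%N by case=> b [bON bS] <-; exact: Sm.
have [_ [b [bON bS] <-] nmax] := bounded_ex_max P0 Pm.
exists b; split => // x Sx; apply/eqP/contraT => xb.
set r := x - proj b x; have r0 : r != 0 by rewrite subr_eq0.
have : P (size b).+1.
  exists ((nm r)^-1 *: r :: b) => //; split.
    apply: orthonormal_cons => //; first exact: ip_normalize.
    by move=> y yb; rewrite ipZl ip_sub_proj ?mulr0.
  move=> y; rewrite inE => /orP[/eqP->|/bS //].
  by apply: subspaceZ => //; apply: subspaceB => //; apply: subspace_proj.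
by move/nmax; rewrite ltnn.
Qed.

End InnerProduct.

Lemma le_of_sqr_le (F : numDomainType) (x e : F) : 0 <= x -> 0 < e ->
  x ^+ 2 <= 3%:R * e * x + 2%:R * e ^+ 2 -> x <= 4%:R * e.
Proof.
move=> x0 e0 hx; have e4 : 0 <= 4%:R * e by rewrite mulr_ge0 ?ler0n ?ltW.
rewrite real_leNgt ?ger0_real //; apply/negP => lt4x.
have x_pos : 0 < x := le_lt_trans e4 lt4x.
suff /(le_lt_trans hx) : 3%:R * e * x + 2%:R * e ^+ 2 < x ^+ 2 by rewrite ltxx.
have -> : x ^+ 2 = 3%:R * e * x + (x - 3%:R * e) * x by ring.
rewrite ltrD2l; apply: (@le_lt_trans _ _ (e * x)).
  rewrite expr2 mulrCA ler_pM2l //; apply: le_trans (ltW lt4x).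
  by rewrite ler_pM2r // ler_nat.
rewrite ltr_pM2r // -subr_gt0.
by rewrite (_ : x - 3%:R * e - e = x - 4%:R * e) ?subr_gt0 //; ring.
Qed.

Lemma dist_lt_isolated (F : numDomainType) (lam del mu t z : F) :
  `|z - lam| = del -> `|mu - lam| < del -> 3%:R * del < `|t - lam| ->
  `|z - mu| < `|t - mu|.
Proof.
move=> zl ml tl; apply: (@lt_trans _ _ (del + del)).
  by apply: le_lt_trans (ler_distD lam _ _) _; rewrite zl distrC ltrD2l.
rewrite -(ltrD2r `|mu - lam|); apply: lt_le_trans (ler_distD mu _ _).
apply: le_lt_trans tl; rewrite (_ : 3%:R * del = del + del + del); last by ring.
by rewrite lerD2l ltW.
Qed.

Section SymmetricOperator.
Variables (R : realType) (V W : lmodType R[i]) (ipW : W -> W -> R[i]).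
Variable i : {linear V -> W}.
Hypotheses (ipW_inner : is_inner_product ipW) (i_inj : injective i).

Definition ipv (x y : V) := ipW (i x) (i y).
Local Notation nm := (hnorm ipv).

Lemma ipv_inner : is_inner_product ipv.
Proof.
split=> [a x y z|x y|x|x /(ip_eq0 ipW_inner) ix0].
- by rewrite /ipv linearD linearZ ipDZl.
- exact: ipC ipW_inner _ _.
- exact: ip_ge0 ipW_inner _.
- by apply: i_inj; rewrite ix0 linear0.
Qed.
Let ipvI := ipv_inner.

Lemma shiftopN (A : {linear V -> W}) z y : shiftop i A z (- y) = - shiftop i A z y.
Proof. by rewrite /shiftop [i _]linearN [A _]linearN scalerN opprK opprB addrC. Qed.

Lemma shiftop_perturb (A B : {linear V -> W}) z mu v y : B v = mu *: i v ->
  shiftop i A z y = A v - B v -> shiftop i A z (v + y) = (z - mu) *: i v.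
Proof.
rewrite /shiftop [i (_ + _)]linearD [A (_ + _)]linearD scalerDr scalerBl opprD addrACA.
move=> <- ->.
by rewrite addrA subrK.
Qed.

Variable A : {linear V -> W}.

Lemma eigenvalue_in_spectrum t : is_eigenvalue i A t -> in_spectrum ipW i A t.
Proof.
case=> e [e0 Ae] [g [gK _]]; move: e0; apply/negP; rewrite negbK; apply/eqP.
by apply: (can_inj gK); rewrite /shiftop Ae !linear0 subrr addr0.
Qed.

Lemma eigenspace_subspace t : subspace (fun e => A e = t *: i e).
Proof.
split=> [|a x y Ax Ay]; first by rewrite !linear0.
by rewrite !linearP /= Ax Ay.
Qed.

Lemma geom_mult_onb b t : orthonormal ipv b -> (forall y, y \in b -> A y = t *: i y) ->
  (forall e, A e = t *: i e -> e = proj ipv b e) -> geom_mult i A t (size b).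
Proof.
move=> bON bt bspan; split.
  exists (fun k : 'I_(size b) => nth 0 b k); split.
    by move=> k; apply/bt/mem_nth.
  by move: (orthonormal_lin_indep ipvI bON (leqnn _)).
by move=> f ft; apply: (span_lin_dep ipvI (ltnSn _)) => j; apply/bspan/ft.
Qed.

Lemma geom_mult_card_le t m b : geom_mult i A t m -> orthonormal ipv b ->
  (forall y, y \in b -> A y = t *: i y) -> (size b <= m)%N.
Proof.
case=> _ dep bON bt; rewrite leqNgt; apply/negP => mb.
apply: (dep (fun k => nth 0 b k)); last by move: (orthonormal_lin_indep ipvI bON mb).
by move=> k; apply/bt/mem_nth/(leq_trans (ltn_ord k) mb).
Qed.

Lemma geom_mult_card_ge t m b : geom_mult i A t m ->
  (forall e, A e = t *: i e -> e = proj ipv b e) -> (m <= size b)%N.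
Proof.
case=> [[f [ft indep]] _] bspan; rewrite leqNgt; apply/negP => bm.
by apply: (span_lin_dep ipvI bm _ indep) => j; apply/bspan/ft.
Qed.

Lemma geom_mult_onb_exists t m : geom_mult i A t m -> exists b,
  [/\ orthonormal ipv b, size b = m, forall y, y \in b -> A y = t *: i y &
      forall e, A e = t *: i e -> e = proj ipv b e].
Proof.
move=> gm; have [b [bON bt bspan]] :=
  max_orthonormal ipvI (eigenspace_subspace t) (fun b => geom_mult_card_le gm).
exists b; split=> //; apply/eqP.
by rewrite eqn_leq (geom_mult_card_le gm) // (geom_mult_card_ge gm).
Qed.

Hypothesis A_sym : forall u w, ipW (A u) (i w) = ipW (i u) (A w).

Lemma eigenvalue_conj e t : A e = t *: i e -> e != 0 -> t^* = t.
Proof.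
move=> Ae e0; have := A_sym e e; rewrite Ae ipZl // ipZr // => /eqP.
rewrite -subr_eq0 -mulrBl mulf_eq0 subr_eq0 => /orP[/eqP //|/eqP /(ip_eq0 ipvI) e_0].
by move: e0; rewrite e_0 eqxx.
Qed.

Lemma eigvec_orth e f t s : A e = t *: i e -> A f = s *: i f -> t != s -> ipv e f = 0.
Proof.
move=> Ae Af ts; have [->|f0] := eqVneq f 0; first exact: ip0r.
have := A_sym e f; rewrite Ae Af ipZl // ipZr // (eigenvalue_conj Af f0) => /eqP.
by rewrite -subr_eq0 -mulrBl mulf_eq0 subr_eq0 (negPf ts) => /eqP.
Qed.

Lemma eigvec_orth_sums n (f : 'I_n -> V) (t : 'I_n -> R[i]) (P Q : pred 'I_n)
    (c d : 'I_n -> R[i]) :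
  (forall k, A (f k) = t k *: i (f k)) -> (forall k l, P k -> Q l -> t k != t l) ->
  ipv (\sum_(k | P k) c k *: f k) (\sum_(l | Q l) d l *: f l) = 0.
Proof.
move=> Af tPQ; rewrite ip_suml // big1 // => k Pk; rewrite ip_sumr // big1 // => l Ql.
by rewrite ipZl // ipZr // (eigvec_orth (Af k) (Af l) (tPQ _ _ Pk Ql)) !mulr0.
Qed.

Lemma ip_shiftop_eigvec x v e z mu t : shiftop i A z x = (z - mu) *: i v ->
  A e = t *: i e -> e != 0 -> (z - t) * ipv x e = (z - mu) * ipv v e.
Proof.
move=> Ax Ae e0; have := congr1 (ipW^~ (i e)) Ax.
rewrite /= !(ipBl ipW_inner, ipZl ipW_inner) A_sym Ae (ipZr ipW_inner).
by rewrite (eigenvalue_conj Ae e0) => <-; rewrite /ipv mulrBl.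
Qed.

Lemma eigvec_scale_le n (f : 'I_n -> V) (t c : 'I_n -> R[i]) (psi : R[i] -> R[i])
    (M : R[i]) (P : pred 'I_n) :
  (forall k, A (f k) = t k *: i (f k)) -> 0 <= M -> (forall k, P k -> `|psi (t k)| <= M) ->
  ipv (\sum_(k | P k) (c k * psi (t k)) *: f k) (\sum_(k | P k) (c k * psi (t k)) *: f k)
    <= M ^+ 2 * ipv (\sum_(k | P k) c k *: f k) (\sum_(k | P k) c k *: f k).
Proof.
(* Eigenvectors of one eigenvalue need not be orthogonal: group the terms by eigenvalue,
   each group is scaled by a single factor, and distinct groups are orthogonal. *)
move=> Af M0; move: {2}#|P| (leqnn #|P|) => N.
elim: N P => [|N IH] P cardP psiM; have [k0 Pk0|P0] := pickP P;
  try by rewrite !(big_pred0 _ _ _ _ P0) (ip0l ipvI) mulr0.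
  by move: cardP; rewrite (cardD1 k0) (_ : k0 \in P = true).
pose Q := [pred k | P k && (t k != t k0)].
have cardQ : (#|Q| <= N)%N.
  rewrite -ltnS; apply: leq_trans cardP; apply/proper_card/properP; split.
    by apply/subsetP => k /andP[].
  by exists k0; rewrite ?inE /= ?eqxx ?andbF.
have split_sum (d : 'I_n -> R[i]) : \sum_(k | P k) d k *: f k =
    \sum_(k | P k && (t k == t k0)) d k *: f k + \sum_(k | Q k) d k *: f k.
  exact: bigID.
have orth (d d' : 'I_n -> R[i]) :
    ipv (\sum_(k | P k && (t k == t k0)) d k *: f k) (\sum_(k | Q k) d' k *: f k) = 0.
  by apply: eigvec_orth_sums => // k l /andP[_ /eqP->] /andP[_]; rewrite eq_sym.
rewrite !split_sum.
have -> : \sum_(k | P k && (t k == t k0)) (c k * psi (t k)) *: f k =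
    psi (t k0) *: \sum_(k | P k && (t k == t k0)) c k *: f k.
  by rewrite scaler_sumr; apply: eq_bigr => k /andP[_ /eqP->]; rewrite scalerA mulrC.
have orthZ : ipv (psi (t k0) *: \sum_(k | P k && (t k == t k0)) c k *: f k)
    (\sum_(k | Q k) (c k * psi (t k)) *: f k) = 0 by rewrite (ipZl ipvI) orth mulr0.
rewrite !(ip_orthD ipvI) ?orth ?orthZ // (ipZl ipvI) (ipZr ipvI) mulrA -normCK mulrDr.
apply: lerD; last by apply: IH => // k /andP[/psiM].
by apply: ler_wpM2r; rewrite ?(ip_ge0 ipvI) // ler_sqr ?nnegrE ?normr_ge0 ?psiM.
Qed.

Section NearSpectralSpan.
Variables (T : pred R[i]) (b : seq V) (v d : V) (z mu : R[i]).
Hypotheses (b_orthonormal : orthonormal ipv b)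
  (b_eigvec : forall y, y \in b -> exists2 t, T t & A y = t *: i y)
  (b_span : forall e t, T t -> A e = t *: i e -> e = proj ipv b e)
  (shift_vd : shiftop i A z (v + d) = (z - mu) *: i v) (z_neq_mu : z != mu)
  (z_closer : forall t, ~~ T t -> is_eigenvalue i A t -> `|z - mu| <= `|t - mu|).

Let psi t := if T t then 0 else ((z - t) / (t - mu))^*.

Lemma eigenvalue_neq_mu t : ~~ T t -> is_eigenvalue i A t -> t != mu.
Proof.
move=> Tt /(z_closer Tt); apply: contraTneq => ->.
by rewrite subrr normr0 normr_le0 subr_eq0.
Qed.

Lemma psi_norm_le t : is_eigenvalue i A t -> `|psi t| <= 2%:R.
Proof.
move=> ev; rewrite /psi; case: ifP => Tt; first by rewrite normr0 ler0n.
have tmu : 0 < `|t - mu| by rewrite normr_gt0 subr_eq0 eigenvalue_neq_mu ?Tt.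
rewrite norm_conjC normrM normfV ler_pdivrMr // mulr_natl mulr2n.
apply: le_trans (ler_distD mu z t) _.
by rewrite [`|mu - t|]distrC lerD2r z_closer ?Tt.
Qed.

Lemma ip_res_eigvec e t : A e = t *: i e ->
  ipv (v - proj ipv b v) e = (psi t)^* * ipv d e.
Proof.
move=> Ae; rewrite /psi; case: ifP => Tt.
  rewrite conjC0 mul0r (b_span Tt Ae) (ip_proj_orth ipvI) // => y yb.
  exact: ip_sub_proj.
have [->|e0] := eqVneq e 0; first by rewrite !(ip0r ipvI) mulr0.
have tmu : t - mu != 0 by rewrite subr_eq0 eigenvalue_neq_mu ?Tt //; exists e.
rewrite (ipBl ipvI).
have -> : ipv (proj ipv b v) e = 0.
  rewrite (ip_suml ipvI) big_seq big1 // => y /b_eigvec[s Ts Ay].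
  by rewrite (ipZl ipvI) (eigvec_orth Ay Ae) ?mulr0 //; apply: contraTneq Ts => ->; rewrite Tt.
have := ip_shiftop_eigvec shift_vd Ae e0; rewrite (ipDl ipvI) => shift_e.
have rel : (t - mu) * ipv v e = (z - t) * ipv d e.
  have -> : (t - mu) * ipv v e = (z - mu) * ipv v e - (z - t) * ipv v e by ring.
  by rewrite -shift_e; ring.
by rewrite subr0 conjCK mulrAC -rel mulrC mulKf.
Qed.

Lemma near_spectral_span eps : pure_point ipW i A -> 0 < eps -> nm d <= eps ->
  nm (v - proj ipv b v) <= 4%:R * eps.
Proof.
(* With a an eigenvector expansion of r := v - proj b v up to eps,
   |r|^2 = <d, g> + <r, r - a> where |g| <= 2 |a| <= 2 (|r| + eps). *)
move=> A_pp eps0 d_le; set r := v - proj ipv b v.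
have [n [f [t [c [Af ra_lt]]]]] := A_pp (i r) eps eps0.
pose P := [pred k | f k != 0].
pose a := \sum_(k | P k) c k *: f k; pose g := \sum_(k | P k) (c k * psi (t k)) *: f k.
have ev k : P k -> is_eigenvalue i A (t k) by move=> fk0; exists (f k).
have ra : nm (r - a) < eps.
  rewrite (_ : a = \sum_k c k *: f k).
    by rewrite /hnorm /ipv linearB linear_sum; under eq_bigr do rewrite linearZ.
  by rewrite [RHS](bigID P) /= [X in _ + X]big1 ?addr0 // => k /negPn/eqP->; rewrite scaler0.
have r_a : ipv r a = ipv d g.
  rewrite !(ip_sumr ipvI); apply: eq_bigr => k _.
  by rewrite !(ipZr ipvI) (ip_res_eigvec (Af k)) rmorphM mulrA.
have g_le : nm g <= 2%:R * nm a.
  rewrite -ler_sqr ?nnegrE ?mulr_ge0 ?ler0n ?(nm_ge0 ipvI) // exprMn !(nm_sqr ipv).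
  by apply: eigvec_scale_le; rewrite ?ler0n // => k /ev/psi_norm_le.
have a_le : nm a <= nm r + eps.
  rewrite -[a](subKr r) addrC; apply: le_trans (nmD ipvI _ _) _.
  by rewrite (nmN ipvI) addrC lerD2l ltW.
have rr : ipv r r = ipv d g + ipv r (r - a).
  by rewrite -r_a -(ipDr ipvI) addrC subrK.
apply: le_of_sqr_le (nm_ge0 ipvI _) eps0 _.
rewrite (nm_sqr ipv) -[ipv r r]ger0_norm ?(ip_ge0 ipvI) // rr.
apply: le_trans (ler_normD _ _) _.
have -> : 3%:R * eps * nm r + 2%:R * eps ^+ 2 = eps * (2%:R * (nm r + eps)) + nm r * eps.
  by ring.
apply: lerD; apply: le_trans (cauchy_schwarz ipvI _ _) _.
  apply: ler_pM; rewrite ?(nm_ge0 ipvI) //; apply: le_trans g_le _.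
  by rewrite ler_pM2l ?ltr0n.
by rewrite ler_wpM2l ?(nm_ge0 ipvI) ?ltW.
Qed.

End NearSpectralSpan.

Section Spectral.
Variables (T : pred R[i]) (m : nat).
Hypothesis T_card_le : forall b, orthonormal ipv b ->
  (forall y, y \in b -> exists2 t, T t & A y = t *: i y) -> (size b <= m)%N.

Lemma unit_eigvecs_exist s : uniq s -> (forall mu, mu \in s -> is_eigenvalue i A mu) ->
  exists b, [/\ orthonormal ipv b, size b = size s &
    forall y, y \in b -> exists2 t, t \in s & A y = t *: i y].
Proof.
elim: s => [|mu s IH] /=; first by exists [::]; split=> //; split.
case/andP=> mus us sA.
have [b [bON sb bs]] := IH us (fun t ts => sA t (@mem_behead _ (mu :: s) _ ts)).
have [e [e0 Ae]] := sA mu (mem_head _ _); set u := (nm e)^-1 *: e.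
have Au : A u = mu *: i u by rewrite /u !linearZ /= Ae scalerA mulrC -scalerA.
exists (u :: b); split; rewrite /= ?sb //.
  apply: orthonormal_cons (ip_normalize ipvI e0) _ => // y /bs[t ts Ay].
  by apply: (eigvec_orth Au Ay); apply: contraNneq mus => ->.
move=> y; rewrite inE => /predU1P[->|/bs[t ts Ay]]; first by exists mu; rewrite ?mem_head.
by exists t; rewrite // inE ts orbT.
Qed.

Lemma eigenvalues_seq_exists :
  exists2 s, uniq s & forall mu, mu \in s <-> is_eigenvalue i A mu /\ T mu.
Proof.
pose P n := exists2 s, uniq s /\ (forall mu, mu \in s -> is_eigenvalue i A mu /\ T mu)
  & size s = n.
have P0 : P 0%N by exists [::].
have Pm n : P n -> (n <= m)%N.
  case=> s [us sAT] <-.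
  have [b [bON <- bs]] := unit_eigvecs_exist us (fun t ts => (sAT t ts).1).
  by apply: T_card_le bON _ => y /bs[t /sAT[_ Tt] Ay]; exists t.
have [_ [s [us sAT] <-] smax] := bounded_ex_max P0 Pm.
exists s => // mu; split=> [/sAT //|muAT]; apply: contraT => mus.
have : P (size s).+1.
  by exists (mu :: s); split; rewrite /= ?mus // => t; rewrite inE => /predU1P[->|/sAT].
by move/smax; rewrite ltnn.
Qed.

Lemma flatten_eigenbases (s : seq R[i]) (bs : R[i] -> seq V) : uniq s ->
  (forall mu, mu \in s -> [/\ orthonormal ipv (bs mu),
     forall y, y \in bs mu -> A y = mu *: i y &
     forall e, A e = mu *: i e -> e = proj ipv (bs mu) e]) ->
  [/\ orthonormal ipv (flatten [seq bs mu | mu <- s]),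
     forall y, y \in flatten [seq bs mu | mu <- s] -> exists2 t, t \in s & A y = t *: i y &
     forall e t, t \in s -> A e = t *: i e -> e = proj ipv (flatten [seq bs mu | mu <- s]) e].
Proof.
elim: s => [|mu s IH] /=; first by split=> //; split.
case/andP=> mus us bsP; have [bON bmu bspan] := bsP mu (mem_head _ _).
have [BON BA Bspan] := IH us (fun t ts => bsP t (@mem_behead _ (mu :: s) _ ts)).
have orth e y : A e = mu *: i e -> y \in flatten [seq bs mu | mu <- s] -> ipv e y = 0.
  by move=> Ae /BA[t ts Ay]; apply: (eigvec_orth Ae Ay); apply: contraNneq mus => ->.
split.
- by apply: orthonormal_cat => // y1 y2 /bmu; apply: orth.
- move=> y; rewrite mem_cat => /orP[/bmu Ay|/BA[t ts Ay]].
    by exists mu; rewrite ?mem_head.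
  by exists t; rewrite // inE ts orbT.
move=> e t; rewrite inE proj_cat => /predU1P[->|ts] Ae.
  by rewrite (proj_orth (b := flatten _)) ?addr0 -?bspan // => y; apply: orth Ae.
rewrite (proj_orth (b := bs mu)) ?add0r -?(Bspan e t) // => y /bmu Ay.
by apply: (eigvec_orth Ae Ay); apply: contraNneq mus => <-.
Qed.

Lemma spectral_decomposition : exists s, [/\ uniq s,
    forall mu, mu \in s <-> is_eigenvalue i A mu /\ T mu &
    exists gm, (forall mu, mu \in s -> geom_mult i A mu (gm mu)) /\
    exists B, [/\ orthonormal ipv B, size B = (\sum_(mu <- s) gm mu)%N,
      forall y, y \in B -> exists2 t, T t & A y = t *: i y &
      forall e t, T t -> A e = t *: i e -> e = proj ipv B e]].
Proof.
have [s us sAT] := eigenvalues_seq_exists.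
have bases mu : mu \in s -> exists b, [/\ orthonormal ipv b,
    forall y, y \in b -> A y = mu *: i y & forall e, A e = mu *: i e -> e = proj ipv b e].
  move=> /sAT[_ Tmu]; apply: (max_orthonormal ipvI (eigenspace_subspace mu)) => b bON bmu.
  by apply: T_card_le bON _ => y /bmu Ay; exists mu.
have [bs bsP] := choose_on_seq [::] bases.
have [BON BA Bspan] := flatten_eigenbases us bsP.
exists s; split=> //; exists (fun mu => size (bs mu)); split.
  by move=> mu /bsP[]; apply: geom_mult_onb.
exists (flatten [seq bs mu | mu <- s]); split=> //.
- by rewrite size_flatten /shape sumnE !big_map.
- by move=> y /BA[t /sAT[_ Tt] Ay]; exists t.
move=> e t Tt Ae; have [->|e0] := eqVneq e 0.
  by rewrite proj_orth // => y _; apply: ip0l ipvI _.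
by apply: (Bspan e t _ Ae); apply/sAT; split=> //; exists e.
Qed.

End Spectral.

End SymmetricOperator.

Section Perturbation.
Variables (R : realType) (V W : lmodType R[i]) (ipW : W -> W -> R[i]).
Variables (i L L' : {linear V -> W}) (lambda delta eps : R[i]) (m : nat).
Hypotheses (ipW_inner : is_inner_product ipW) (i_inj : injective i).
Hypotheses (L_sym : forall u w, ipW (L u) (i w) = ipW (i u) (L w))
  (L'_sym : forall u w, ipW (L' u) (i w) = ipW (i u) (L' w))
  (L_pp : pure_point ipW i L) (L'_pp : pure_point ipW i L').
Hypotheses (L_mult : geom_mult i L lambda m) (delta_gt0 : 0 < delta)
  (L_isolated : forall t, in_spectrum ipW i L t -> t != lambda ->
     3%:R * delta < `|t - lambda|)
  (L'_invertible : invertible_at ipW i L' (lambda + delta)).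
Hypotheses (eps_gt0 : 0 < eps) (eps_small : m.+1%:R * (4%:R * eps) < 1)
  (L_res : forall mu v, `|mu - lambda| <= delta -> L' v = mu *: i v ->
     hnorm ipW (i v) = 1 -> forall y, shiftop i L (lambda + delta) y = L v - L' v ->
     hnorm ipW (i y) < eps)
  (L'_res : forall mu u, `|mu - lambda| <= delta -> L u = mu *: i u ->
     hnorm ipW (i u) = 1 -> forall y, shiftop i L' (lambda + delta) y = L u - L' u ->
     hnorm ipW (i y) < eps).

Local Notation ipv := (ipv ipW i).
Local Notation nm := (hnorm ipv).
Let z := lambda + delta.
Let ipvI := ipv_inner ipW_inner i_inj.

Let z_lambda : `|z - lambda| = delta.
Proof. by rewrite /z addrAC subrr add0r gtr0_norm. Qed.

Lemma L_invertible : invertible_at ipW i L z.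
Proof.
apply: NNPP => /L_isolated; rewrite z_lambda -subr_eq0 -normr_eq0 z_lambda gt_eqF //.
by move/(_ isT); rewrite -[X in _ < X]mul1r ltr_pM2r // ltrn1.
Qed.

Lemma near_eigenspace b v mu : orthonormal ipv b ->
  (forall y, y \in b -> L y = lambda *: i y) ->
  (forall e, L e = lambda *: i e -> e = proj ipv b e) ->
  `|mu - lambda| < delta -> L' v = mu *: i v -> ipv v v = 1 ->
  nm (v - proj ipv b v) <= 4%:R * eps.
Proof.
move=> bON bL bspan mu_near L'v vv; have [g [_ [gK _]]] := L_invertible.
have Ly : shiftop i L z (g (L v - L' v)) = L v - L' v := gK _.
apply: (near_spectral_span ipW_inner i_inj L_sym (T := pred1 lambda) bON _ _
  (shiftop_perturb L'v Ly)) => // [y /bL Ly'|e t /eqP->|||].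
- by exists lambda; rewrite /= ?eqxx.
- exact: bspan.
- by apply: contraTneq mu_near => <-; rewrite z_lambda ltxx.
- move=> t tl /eigenvalue_in_spectrum/L_isolated/(_ tl).
  by move/(dist_lt_isolated z_lambda mu_near)/ltW.
- by apply/ltW/(L_res (ltW mu_near) L'v _ Ly); apply: nm_eq1.
Qed.

Lemma near_spectral_subspace b u : orthonormal ipv b ->
  (forall y, y \in b -> exists2 t, `|t - lambda| < delta & L' y = t *: i y) ->
  (forall e t, `|t - lambda| < delta -> L' e = t *: i e -> e = proj ipv b e) ->
  L u = lambda *: i u -> ipv u u = 1 -> nm (u - proj ipv b u) <= 4%:R * eps.
Proof.
move=> bON bL' bspan Lu uu; have [g [_ [gK _]]] := L'_invertible.
have L'y : shiftop i L' z (g (L u - L' u)) = L u - L' u := gK _.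
have L'y' : shiftop i L' z (- g (L u - L' u)) = L' u - L u by rewrite shiftopN L'y opprB.
apply: (near_spectral_span ipW_inner i_inj L'_sym
  (T := fun t => `|t - lambda| < delta) bON bL' bspan (shiftop_perturb Lu L'y')) => //.
- by rewrite -subr_eq0 -normr_eq0 z_lambda gt_eqF.
- by move=> t tl _; rewrite z_lambda real_leNgt ?normr_real ?(gtr0_real delta_gt0).
rewrite nmN //; apply/ltW/(L'_res _ Lu _ L'y); last by apply: nm_eq1.
by rewrite subrr normr0 ltW.
Qed.

Lemma perturbed_card_le B : orthonormal ipv B ->
  (forall y, y \in B -> exists2 t, `|t - lambda| < delta & L' y = t *: i y) ->
  (size B <= m)%N.
Proof.
move=> BON BL'; rewrite leqNgt; apply/negP => mB.
have [bE [bEON bE_size bEL bE_span]] := geom_mult_onb_exists ipW_inner i_inj L_mult.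
suff : (m.+1 <= size bE)%N by rewrite bE_size ltnn.
apply: (near_span_card_le ipvI (a := fun k : 'I_m.+1 => nth 0 B k) (rho := 4%:R * eps)) => //.
  exact: orthonormal_nth.
move=> j; have /BL'[t tl L'y] : nth 0 B j \in B.
  by rewrite mem_nth // (leq_trans (ltn_ord j) mB).
by apply: near_eigenspace bEON bEL bE_span tl L'y _; rewrite (orthonormal_nth BON mB) eqxx.
Qed.

Lemma geom_mult_perturbed : exists s : seq R[i], uniq s /\
  (forall mu, mu \in s <-> (is_eigenvalue i L' mu /\ `|mu - lambda| < delta)) /\
  exists gm : R[i] -> nat,
    (forall mu, mu \in s -> geom_mult i L' mu (gm mu)) /\ (\sum_(mu <- s) gm mu)%N = m.
Proof.
have [s [us sE [gm [gmP [B [BON B_size BL' B_span]]]]]] :=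
  spectral_decomposition ipW_inner i_inj L'_sym (T := fun t => `|t - lambda| < delta)
    perturbed_card_le.
exists s; do 2!split=> //; exists gm; split=> //.
rewrite -B_size; apply/eqP; rewrite eqn_leq perturbed_card_le //=.
have [bE [bEON bE_size bEL _]] := geom_mult_onb_exists ipW_inner i_inj L_mult.
rewrite -bE_size; apply: (near_span_card_le ipvI (a := fun k : 'I_(size bE) => nth 0 bE k)
  (rho := 4%:R * eps)).
- exact: orthonormal_nth.
- move=> j; apply: near_spectral_subspace BON BL' B_span _ _; first exact/bEL/mem_nth.
  by rewrite (orthonormal_nth bEON (leqnn _)) eqxx.
apply: le_lt_trans eps_small.
by rewrite ler_wpM2r ?mulr_ge0 ?ler0n ?(ltW eps_gt0) // ler_nat bE_size.
Qed.

End Perturbation.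

Unset Implicit Arguments.
Set Strict Implicit.

Theorem theoremt (R : realType)
  (V W : lmodType R[i]) (ipV : V -> V -> R[i]) (ipW : W -> W -> R[i])
  (i : {linear V -> W})
  (L : {linear V -> W}) (LN : nat -> {linear V -> W})
  (lambda delta : R[i]) (m : nat) :
  (* Hilbert spaces V ⊂ W, bounded dense inclusion, V separable *)
  is_hilbert ipV -> is_hilbert ipW -> injective i ->
  bounded_op ipV ipW i -> dense_range ipW i -> separable ipV ->
  (* the operators *)
  bounded_op ipV ipW L -> self_adjoint ipW i L -> pure_point ipW i L ->
  (forall N, bounded_op ipV ipW (LN N)) ->
  (forall N, self_adjoint ipW i (LN N)) ->
  (forall N, pure_point ipW i (LN N)) ->
  (* lambda an eigenvalue of finite geometric multiplicity m *)
  is_eigenvalue i L lambda -> geom_mult i L lambda m ->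
  (* isolation of lambda in the spectrum *)
  0 < delta ->
  (forall z, in_spectrum ipW i L z -> z != lambda -> 3%:R * delta < `|z - lambda|) ->
  (* invertibility of z - L_N on the annulus for large N *)
  (exists N0 : nat, forall N : nat, (N0 < N)%N -> forall z : R[i],
     delta <= `|z - lambda| <= 2%:R * delta -> invertible_at ipW i (LN N) z) ->
  (* uniform convergence of the two resolvent expressions *)
  (forall eps : R[i], 0 < eps -> exists N1 : nat, forall N : nat, (N1 < N)%N ->
     forall z : R[i], delta <= `|z - lambda| <= 2%:R * delta ->
       (forall (mu : R[i]) (v : V), `|mu - lambda| <= delta ->
          LN N v = mu *: i v -> hnorm ipW (i v) = 1 ->
          forall y : V, shiftop i L z y = L v - LN N v ->
            hnorm ipW (i y) < eps) /\
       (forall (mu : R[i]) (u : V), `|mu - lambda| <= delta ->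
          L u = mu *: i u -> hnorm ipW (i u) = 1 ->
          forall y : V, shiftop i (LN N) z y = L u - LN N u ->
            hnorm ipW (i y) < eps)) ->
  exists N0' : nat, forall N : nat, (N0' < N)%N ->
    exists s : seq R[i],
      uniq s /\
      (forall mu : R[i], mu \in s <-> (is_eigenvalue i (LN N) mu /\ `|mu - lambda| < delta)) /\
      exists gm : R[i] -> nat,
        (forall mu : R[i], mu \in s -> geom_mult i (LN N) mu (gm mu)) /\
        (\sum_(mu <- s) gm mu)%N = m.
Proof.
move=> _ [ipW_inner _] i_inj _ _ _ _ [L_sym _] L_pp _ LN_sa LN_pp _ L_mult delta_gt0 L_iso.
move=> [N0 LN_inv] conv.
pose eps : R[i] := (8%:R * m.+1%:R)^-1.
have eps_gt0 : 0 < eps by rewrite invr_gt0 mulr_gt0 ?ltr0n.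
have eps_small : m.+1%:R * (4%:R * eps) < 1.
  have -> : m.+1%:R * (4%:R * eps) = 2%:R^-1 :> R[i].
    by rewrite /eps; field; rewrite addrC natr1 pnatr_eq0.
  by rewrite invf_lt1 ?ltr0n // ltr1n.
have [N1 conv_eps] := conv eps eps_gt0.
exists (maxn N0 N1) => N; rewrite gtn_max => /andP[N0N N1N].
have z_ann : delta <= `|lambda + delta - lambda| <= 2%:R * delta.
  rewrite addrAC subrr add0r gtr0_norm // lexx /=.
  by rewrite -[X in X <= _]mul1r ler_pM2r // ler1n.
have [L_res LN_res] := conv_eps N N1N _ z_ann.
exact: (geom_mult_perturbed ipW_inner i_inj L_sym (LN_sa N).1 L_pp (LN_pp N) L_mult
  delta_gt0 L_iso (LN_inv N N0N _ z_ann) eps_gt0 eps_small L_res LN_res).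
Qed.
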